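(* Let $\{\hat{\mathcal Z}_t\}_{t=1}^{T+1}$ be Banach spaces, $\mathfrak F$ a class of uniformly bounded measurable functions (used on each $\hat{\mathcal Z}_{t+1}$), and $\varepsilon_t,\delta_t>0$. Suppose $\hat\sigma_t:\mathcal H_t\to\hat{\mathcal Z}_t$, $\hat P_t:\hat{\mathcal Z}_t\times\mathcal A\to\Delta(\hat{\mathcal Z}_{t+1})$, $\hat r_t:\hat{\mathcal Z}_t\times\mathcal A\to\mathbb R$ ($t=1,\dots,T$) form an $(\{\varepsilon_t\},\{\delta_t\})$-AIS generator, i.e. (AP1) for all $t$, all realizations $h_t$ of $H_t$ and all $a_t\in\mathcal A$: $\big|\mathbb E[R_t\mid H_t=h_t,A_t=a_t]-\hat r_t(\hat\sigma_t(h_t),a_t)\big|\le\varepsilon_t$; (AP2) for all $t$, $h_t$, $a_t$: with $\mu_t(B)=\mathbb P(\hat\sigma_{t+1}(H_{t+1})\in B\mid H_t=h_t,A_t=a_t)$ and $\nu_t(B)=\hat P_t(B\mid\hat\sigma_t(h_t),a_t)$ for Borel $B\subseteq\hat{\mathcal Z}_{t+1}$, $d_{\mathfrak F}(\mu_t,\nu_t)\le\delta_t$. Define $\hat V_{T+1}\equiv0$ and for $t=T,\dots,1$: $\hat Q_t(\hat z,a)=\hat r_t(\hat z,a)+\int_{\hat{\mathcal Z}_{t+1}}\hat V_{t+1}(\hat z')\,\hat P_t(d\hat z'\mid\hat z,a)$ and $\hat V_t(\hat z)=\max_{a\in\mathcal A}\hat Q_t(\hat z,a)$. Let $\alpha_{T+1}=0$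 and $\alpha_t=\varepsilon_t+\rho_{\mathfrak F}(\hat V_{t+1})\delta_t+\alpha_{t+1}$ for $t=T,\dots,1$, so that $\alpha_t=\varepsilon_t+\sum_{\tau=t+1}^{T}\big[\rho_{\mathfrak F}(\hat V_\tau)\delta_{\tau-1}+\varepsilon_\tau\big]$. Then: 1. For every $t$, every realization $h_t$ of $H_t$ and every $a_t\in\mathcal A$: $|Q_t(h_t,a_t)-\hat Q_t(\hat\sigma_t(h_t),a_t)|\le\alpha_t$ and $|V_t(h_t)-\hat V_t(\hat\sigma_t(h_t))|\le\alpha_t$. 2. Let $\hat\pi=(\hat\pi_1,\dots,\hat\pi_T)$ with $\hat\pi_t:\hat{\mathcal Z}_t\to\Delta(\mathcal A)$ satisfy $\mathrm{Supp}(\hat\pi_t(\hat z_t))\subseteq\arg\max_{a\in\mathcal A}\hat Q_t(\hat z_t,a)$ for all $\hat z_t$, and define $\pi_t=\hat\pi_t\circ\hat\sigma_t$. Then for every $t$, $h_t$, $a_t$: $|Q_t(h_t,a_t)-Q^\pi_t(h_t,a_t)|\le2\alpha_t$ and $|V_t(h_t)-V^\pi_t(h_t)|\le2\alpha_t$.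
   Context: Setting: a stochastic input-output system over a finite horizon $t=1,\dots,T$. At each time $t$ an agent chooses an action $A_t$ in a finite action space $\mathcal A$; the system then produces an observation $Y_t$ in a measurable space $\mathcal Y$ and a real reward $R_t$. The history is $H_1=\emptyset$, $H_{t+1}=(H_t,Y_t,A_t)$, taking values in $\mathcal H_t$; the conditional law of $(Y_t,R_t)$ given $(H_t,A_t)$ is fixed by the system. A (history-dependent) policy is $\pi=(\pi_1,\dots,\pi_T)$ with $\pi_t:\mathcal H_t\to\Delta(\mathcal A)$. Optimal value functions: $V_{T+1}\equiv0$, $Q_t(h_t,a_t)=\mathbb E[R_t+V_{t+1}(H_{t+1})\mid H_t=h_t,A_t=a_t]$, $V_t(h_t)=\max_{a\in\mathcal A}Q_t(h_t,a)$. Value functions of a policy $\pi$: $V^\pi_{T+1}\equiv0$, $Q^\pi_t(h_t,a_t)=\mathbb E[R_t+V^\pi_{t+1}(H_{t+1})\mid H_t=h_t,A_t=a_t]$, $V^\pi_t(h_t)=\sum_{a}\pi_t(a\mid h_t)Q^\pi_t(h_t,a)$. Integral probability metric: $d_{\mathfrak F}(\mu,\nu)=\sup_{f\in\mathfrak F}|\int f\,d\mu-\int f\,d\nu|$. Minkowski functional: $\rho_{\mathfrak F}(f)=\inf\{\rho>0:\rho^{-1}f\in\mathfrak F\}$. *)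

From HB Require Import structures.
From mathcomp Require Import all_boot all_order all_algebra.
From mathcomp Require Import all_classical all_reals all_analysis.
Unset Implicit Arguments.
Unset Strict Implicit.
Unset Printing Implicit Defensive.
Import Order.TTheory GRing.Theory Num.Theory.
Local Open Scope classical_set_scope.
Local Open Scope ring_scope.

(* maximum of a real function over a finite action set
   (computed in \bar R; A is nonempty in every use) *)
Definition fmax (A : finType) (R : realType) (f : A -> R) : R :=
  fine (\big[Order.max/-oo%E]_(a : A) (f a)%:E).

Definition ipm d (Z : measurableType d) (R : realType)
  (F : set (Z -> R)) (mu nu : set Z -> \bar R) : \bar R :=
  ereal_sup [set `| (\int[mu]_(z in setT) (f z)%:E - \int[nu]_(z in setT) (f z)%:E)%E |%E
            | f in F].

(* Minkowski functional rho_F(f) = inf { rho > 0 : rho^{-1} f \in F }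
   (= +oo when the set is empty) *)
Definition minkowski (Z : Type) (R : realType) (F : set (Z -> R)) (f : Z -> R)
  : \bar R :=
  ereal_inf [set r%:E | r in [set r : R | 0 < r /\ F (fun z => r^-1 * f z)]].

Arguments fmax {A R}.
Arguments ipm {d Z R}.
Arguments minkowski {Z R}.

Definition is_distr (A : finType) (R : realType) (p : A -> R) : Prop :=
  (forall a, 0 <= p a) /\ \sum_(a : A) p a = 1.

Arguments is_distr {A R}.

Section System.
Context (R : realType) (A : finType).
Context (dY : measure_display) (Y : measurableType dY).
(* history spaces H_t and the history update H_{t+1} = (H_t, Y_t, A_t) *)
Context (dH : nat -> measure_display) (H : forall t, measurableType (dH t)).
Context (ext : forall t, H t -> Y -> A -> H t.+1).
(* conditional law of (Y_t, R_t) given H_t = h, A_t = a *)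
Context (K : forall t, H t -> A -> probability (Y * R)%type R).

(* n = number of remaining steps; V_t = Vopt_aux (T+1-t) t *)
Fixpoint Vopt_aux (n t : nat) : H t -> R :=
  match n with
  | 0 => fun _ => 0
  | n'.+1 => fun h => fmax (fun a =>
       Rintegral (K t h a) setT
         (fun yr => yr.2 + Vopt_aux n' t.+1 (ext t h yr.1 a)))
  end.

Definition Vopt (T t : nat) (h : H t) : R := Vopt_aux (T.+1 - t) t h.

Definition Qopt (T t : nat) (h : H t) (a : A) : R :=
  Rintegral (K t h a) setT (fun yr => yr.2 + Vopt T t.+1 (ext t h yr.1 a)).

(* value functions of a history-dependent policy pi_t : H_t -> Delta(A) *)
Context (pi : forall t, H t -> A -> R).

Fixpoint Vpol_aux (n t : nat) : H t -> R :=
  match n with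
  | 0 => fun _ => 0
  | n'.+1 => fun h => \sum_(a : A) pi t h a *
       Rintegral (K t h a) setT
         (fun yr => yr.2 + Vpol_aux n' t.+1 (ext t h yr.1 a))
  end.

Definition Vpol (T t : nat) (h : H t) : R := Vpol_aux (T.+1 - t) t h.

Definition Qpol (T t : nat) (h : H t) (a : A) : R :=
  Rintegral (K t h a) setT (fun yr => yr.2 + Vpol T t.+1 (ext t h yr.1 a)).

End System.

Section AIS.
Context (R : realType) (A : finType).
Context (dZ : nat -> measure_display) (Z : forall t, measurableType (dZ t)).
Context (Phat : forall t, Z t -> A -> probability (Z t.+1) R).
Context (rhat : forall t, Z t -> A -> R).

Fixpoint Vhat_aux (n t : nat) : Z t -> R :=
  match n with
  | 0 => fun _ => 0
  | n'.+1 => fun z => fmax (fun a =>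
       rhat t z a + Rintegral (Phat t z a) setT (Vhat_aux n' t.+1))
  end.

Definition Vhat (T t : nat) (z : Z t) : R := Vhat_aux (T.+1 - t) t z.

Definition Qhat (T t : nat) (z : Z t) (a : A) : R :=
  rhat t z a + Rintegral (Phat t z a) setT (Vhat T t.+1).

Context (F : forall t, set (Z t.+1 -> R)) (eps delta : nat -> R).

Fixpoint alpha_aux (n t : nat) : \bar R :=
  match n with
  | 0 => 0%E
  | n'.+1 => ((eps t)%:E
              + minkowski (F t) (Vhat_aux n' t.+1) * (delta t)%:E
              + alpha_aux n' t.+1)%E
  end.

Definition alpha (T t : nat) : \bar R := alpha_aux (T.+1 - t) t.

End AIS.

Arguments Vopt {R A dY Y dH H} ext K T t h.
Arguments Qopt {R A dY Y dH H} ext K T t h a.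
Arguments Vpol {R A dY Y dH H} ext K pi T t h.
Arguments Qpol {R A dY Y dH H} ext K pi T t h a.
Arguments Vhat {R A dZ Z} Phat rhat T t z.
Arguments Qhat {R A dZ Z} Phat rhat T t z a.
Arguments alpha {R A dZ Z} Phat rhat F eps delta T t.

(* One Bellman step of the AIS error splits into the
   reward error (at most eps_t by (AP1)), the error of the transition, and the
   error inherited from step t+1.  For the transition, if r^-1 Vhat_{t+1} lies in
   F then the two expectations of Vhat_{t+1} differ by at most r delta_t by (AP2),
   hence by rho_F(Vhat_{t+1}) delta_t.  Maximising over actions is 1-Lipschitz,
   which passes the bound from Q to V; and since pihat is supported on the
   maximisers of Qhat, the value of pihat o sigma obeys the same recursion with
   the same bound.  The factor 2 is the triangle inequality through Qhat and
   Vhat. *)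

From Pilot Require Import Defs.
From HB Require Import structures.
From mathcomp Require Import all_boot all_order all_algebra.
From mathcomp Require Import all_classical all_reals all_analysis.
From mathcomp Require Import lra zify measurable_realfun.
Set Implicit Arguments.
Unset Strict Implicit.
Unset Printing Implicit Defensive.
Import Order.TTheory GRing.Theory Num.Theory.
Local Open Scope classical_set_scope.
Local Open Scope ring_scope.

Section fmax.
Context {R : realType} {A : finType}.
Implicit Types (f g p : A -> R) (a b : A).

Lemma fmax_attained f a0 : exists2 a, fmax f = f a & forall b, f b <= f a.
Proof.
have [a _ fa] := @eq_bigmax _ _ A -oo%E a0 xpredT (fun a => (f a)%:E) isT
  (fun i _ => leNye _).
exists a => [|b]; first by rewrite /fmax fa.
by rewrite -lee_fin -fa (le_bigmax _ (fun a => (f a)%:E)).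
Qed.

Lemma fmax_eq f a : (forall b, f b <= f a) -> fmax f = f a.
Proof.
move=> fa; have [b -> fb] := fmax_attained f a.
by apply/eqP; rewrite eq_le fa fb.
Qed.

(* [0 <= c] covers an empty [A], where both maxima are [fine -oo = 0]. *)
Lemma ler_dist_fmax f g c : 0 <= c ->
  (forall a, `|f a - g a| <= c) -> `|fmax f - fmax g| <= c.
Proof.
move=> c0 fg; case: (pickP (fun _ : A => true)) => [a0 _ | A0]; last first.
  by rewrite /fmax !big_pred0 // subrr normr0.
have [a -> fa] := fmax_attained f a0; have [b -> gb] := fmax_attained g a0.
have := fg a; have := fg b; have := fa b; have := gb a.
rewrite !ler_norml => ? ? /andP[? ?] /andP[? ?].
apply/andP; split; lra.
Qed.

Lemma fmax_distr_argmax f p : is_distr p ->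
  (forall a, 0 < p a -> forall b, f b <= f a) -> fmax f = \sum_a p a * f a.
Proof.
move=> [p0 p1] p_argmax.
have pf a : p a * fmax f = p a * f a.
  have [->|pa] := eqVneq (p a) 0; first by rewrite !mul0r.
  by rewrite (fmax_eq (p_argmax a _)) // lt_def pa p0.
by rewrite -(eq_bigr _ (fun a _ => pf a)) -mulr_suml p1 mul1r.
Qed.

Lemma ler_dist_distr_sum f g p c : is_distr p ->
  (forall a, `|f a - g a| <= c) ->
  `|\sum_a p a * f a - \sum_a p a * g a| <= c.
Proof.
move=> [p0 p1] fg; rewrite -sumrB (le_trans (ler_norm_sum _ _ _)) //.
rewrite -[leRHS]mul1r -p1 mulr_suml ler_sum // => a _.
by rewrite -mulrBr normrM ger0_norm // ler_wpM2l.
Qed.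

End fmax.

Lemma lee_dist_via_center {R : realType} (x y z : R) (al : \bar R) :
  ((`|x - z|)%:E <= al)%E -> ((`|y - z|)%:E <= al)%E ->
  ((`|x - y|)%:E <= 2%:E * al)%E.
Proof.
case: al => [c| |] xz yz.
- move: xz yz; rewrite -EFinM !lee_fin => xz yz.
  by apply: le_trans (ler_distD z x y) _; rewrite distrC in yz; lra.
- by rewrite gt0_muley ?leey // lte_fin.
- by move: xz; rewrite leeNy_eq.
Qed.

Lemma EFin_Rintegral {R : realType} d (X : measurableType d)
  (mu : {measure set X -> \bar R}) (f : X -> R) :
  mu.-integrable setT (EFin \o f) ->
  (Rintegral mu setT f)%:E = (\int[mu]_(x in setT) (f x)%:E)%E.
Proof. by move=> if_; rewrite fineK // (integrable_fin_num _ if_). Qed.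

Section probability_Rintegral.
Context {R : realType} d (X : measurableType d) (P : probability X R).
Implicit Types f g : X -> R.

Lemma bounded_integrable f M : measurable_fun setT f ->
  (forall x, `|f x| <= M) -> P.-integrable setT (EFin \o f).
Proof.
move=> mf fM; apply/integrableP; split; first exact/measurable_EFinP.
apply: (le_lt_trans (integral_le_bound (`|M|%:E) _ _ _ _)) => //.
- exact/measurable_EFinP.
- by apply: aeW => x _ /=; rewrite lee_fin (le_trans (fM x)) // ler_norm.
- apply: lte_mul_pinfty => //.
  by apply: (le_lt_trans (probability_le1 P measurableT)); rewrite ltry.
Qed.

Lemma Rintegral_cst_probability (b : R) : Rintegral P setT (fun=> b) = b.
Proof.
by rewrite Rintegral_cst // (_ : fine (P setT) = 1) ?mulr1 // probability_setT.
Qed.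

Lemma ler_dist_Rintegral f g (b : R) :
  P.-integrable setT (EFin \o f) -> P.-integrable setT (EFin \o g) ->
  (forall x, `|f x - g x| <= b) ->
  `|Rintegral P setT f - Rintegral P setT g| <= b.
Proof.
move=> if_ ig fg; have ifg : P.-integrable setT (EFin \o (f \- g)).
  exact: (integrableB measurableT if_ ig).
rewrite -RintegralB // (le_trans (le_normr_Rintegral _ ifg)) //.
rewrite -[leRHS](Rintegral_cst_probability b) le_Rintegral //.
- exact: integrable_norm.
- exact: (bounded_integrable (M := `|b|) (measurable_cst _)).
- by move=> x _; exact: fg.
Qed.

Lemma lee_dist_Rintegral f g (al : \bar R) :
  P.-integrable setT (EFin \o f) -> P.-integrable setT (EFin \o g) ->
  (0 <= al)%E -> (forall x, ((`|f x - g x|)%:E <= al)%E) ->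
  ((`|Rintegral P setT f - Rintegral P setT g|)%:E <= al)%E.
Proof.
case: al => [b| |] if_ ig al0 fg //; last by rewrite leey.
by rewrite lee_fin; apply: ler_dist_Rintegral => // x; rewrite -lee_fin.
Qed.

End probability_Rintegral.

Lemma ereal_inf_mulr_ge {R : realType} (S : set R) (x d : R) : 0 < d ->
  (forall r, S r -> x <= r * d) ->
  (x%:E <= ereal_inf [set r%:E | r in S] * d%:E)%E.
Proof.
move=> d0 Sx; rewrite -[x](divfK (lt0r_neq0 d0)) EFinM.
apply: lee_wpmul2r; first by rewrite lee_fin ltW.
by apply: le_ereal_inf_tmp => _ [r Sr <-]; rewrite lee_fin ler_pdivrMr // Sx.
Qed.

Lemma minkowski_functional_ge0 {R : realType} (Z : Type) (F : set (Z -> R)) W :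
  (0 <= Defs.minkowski F W)%E.
Proof. by apply: le_ereal_inf_tmp => _ [r [r0 _] <-]; rewrite lee_fin ltW. Qed.

Section ipm_bounds.
Context {R : realType} d1 (X : measurableType d1) d2 (Zs : measurableType d2).
Variable F : set (Zs -> R).
Hypothesis F_measurable : forall f, F f -> measurable_fun setT f.
Hypothesis F_bounded : exists M : R, forall f z, F f -> `|f z| <= M.
Variables (P : probability X R) (Q : probability Zs R) (g : X -> Zs).
Hypothesis g_measurable : measurable_fun setT g.

Lemma F_integrable f : F f ->
  P.-integrable setT (EFin \o (f \o g)) /\ Q.-integrable setT (EFin \o f).
Proof.
move=> Ff; have mf := F_measurable Ff; have [M FM] := F_bounded.
split; first apply: (bounded_integrable P (measurableT_comp mf g_measurable)).
  by move=> x; exact: FM.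
by apply: (bounded_integrable Q mf) => z; exact: FM.
Qed.

Lemma scaled_comp_integrable r W : 0 < r -> F (fun z => r^-1 * W z) ->
  P.-integrable setT (EFin \o (W \o g)).
Proof.
move=> r0 FW; have [ifg _] := F_integrable FW.
have -> : W = fun z => r * (r^-1 * W z).
  by apply/funext => z; rewrite mulrA divff ?mul1r // gt_eqF.
exact: (integrableZl measurableT r ifg).
Qed.

Lemma ler_dist_Rintegral_ipm f (dl : R) : F f ->
  (ipm F (pushforward P g) Q <= dl%:E)%E ->
  `|Rintegral P setT (f \o g) - Rintegral Q setT f| <= dl.
Proof.
move=> Ff le_dl.
have [ifg ifQ] := F_integrable Ff.
have Ef : (\int[pushforward P g]_(z in setT) (f z)%:E =
    (Rintegral P setT (f \o g))%:E)%E.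
  rewrite EFin_Rintegral // (integral_pushforward g_measurable) //.
  exact/measurable_EFinP/F_measurable.
rewrite -lee_fin (le_trans _ le_dl) //; apply: ereal_sup_ubound; exists f => //.
by rewrite Ef -(EFin_Rintegral ifQ).
Qed.

Lemma lee_dist_Rintegral_minkowski W (dl : R) : 0 < dl ->
  (ipm F (pushforward P g) Q <= dl%:E)%E ->
  ((`|Rintegral P setT (W \o g) - Rintegral Q setT W|)%:E
    <= Defs.minkowski F W * dl%:E)%E.
Proof.
move=> dl0 le_dl; apply: ereal_inf_mulr_ge => // r [r0 FW].
have [ifg ifQ] := F_integrable FW; set f := fun z => r^-1 * W z in ifg ifQ.
have -> : W = fun z => r * f z.
  by apply/funext => z; rewrite /f mulrA divff ?mul1r // gt_eqF.
rewrite (RintegralZl r measurableT ifg) (RintegralZl r measurableT ifQ).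
rewrite -mulrBr normrM gtr0_norm // ler_pM2l //.
exact: ler_dist_Rintegral_ipm.
Qed.

Lemma bellman_step_dist (rw V : X -> R) W (rh e dl : R) (al : \bar R) :
  0 < dl -> (0 <= al)%E ->
  P.-integrable setT (EFin \o rw) -> P.-integrable setT (EFin \o V) ->
  `|Rintegral P setT rw - rh| <= e ->
  (forall x, ((`|V x - W (g x)|)%:E <= al)%E) ->
  (ipm F (pushforward P g) Q <= dl%:E)%E ->
  ((`|Rintegral P setT (fun x => rw x + V x) - (rh + Rintegral Q setT W)|)%:E
     <= e%:E + Defs.minkowski F W * dl%:E + al)%E.
Proof.
move=> dl0 al0 irw iV rw_e VW le_dl.
have [[r [r0 FW]] | noFW] :=
    pselect (exists r, 0 < r /\ F (fun z => r^-1 * W z)); last first.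
  have -> : Defs.minkowski F W = +oo%E.
    rewrite /Defs.minkowski (_ : [set r%:E | r in _] = set0) ?ereal_inf0 //.
    by apply/seteqP; split => // x [r FW _]; apply: noFW; exists r.
  rewrite gt0_mulye ?lte_fin // addey // addye ?leey //.
  by rewrite gt_eqF // (lt_le_trans _ al0) // ltNyr.
have iWg := scaled_comp_integrable r0 FW.
rewrite RintegralD //.
set I1 := Rintegral P setT rw; set I2 := Rintegral P setT V.
set I3 := Rintegral P setT (W \o g); set I4 := Rintegral Q setT W.
apply: (@le_trans _ _ ((`|I1 - rh|)%:E + (`|I3 - I4|)%:E + (`|I2 - I3|)%:E)%E).
  rewrite -!EFinD lee_fin (_ : _ - _ = (I1 - rh) + (I3 - I4) + (I2 - I3)).
    by rewrite (le_trans (ler_normD _ _)) // lerD2r ler_normD.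
  by lra.
apply: leeD; first apply: leeD.
- by rewrite lee_fin.
- exact: lee_dist_Rintegral_minkowski.
- exact: lee_dist_Rintegral.
Qed.

End ipm_bounds.
Unset Implicit Arguments.

Section system_recursions.
Context (R : realType) (A : finType).
Context (dY : measure_display) (Y : measurableType dY).
Context (dH : nat -> measure_display) (H : forall t, measurableType (dH t)).
Context (ext : forall t, H t -> Y -> A -> H t.+1).
Context (K : forall t, H t -> A -> probability (Y * R)%type R).

Lemma Vopt_rec T t (h : H t) : (t <= T)%N ->
  Vopt ext K T t h = fmax (Qopt ext K T t h).
Proof. by move=> tT; rewrite /Vopt subSn. Qed.

Lemma Vpol_rec pi T t (h : H t) : (t <= T)%N ->
  Vpol ext K pi T t h = \sum_a pi t h a * Qpol ext K pi T t h a.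
Proof. by move=> tT; rewrite /Vpol subSn. Qed.

End system_recursions.

Section ais_recursions.
Context (R : realType) (A : finType).
Context (dZ : nat -> measure_display) (Z : forall t, measurableType (dZ t)).
Context (Phat : forall t, Z t -> A -> probability (Z t.+1) R).
Context (rhat : forall t, Z t -> A -> R).
Context (F : forall t, set (Z t.+1 -> R)) (eps delta : nat -> R).

Lemma Vhat_rec T t (z : Z t) : (t <= T)%N ->
  Vhat Phat rhat T t z = fmax (Qhat Phat rhat T t z).
Proof. by move=> tT; rewrite /Vhat subSn. Qed.

Lemma alpha_rec T t : (t <= T)%N ->
  alpha Phat rhat F eps delta T t =
  ((eps t)%:E + Defs.minkowski (F t) (Vhat Phat rhat T t.+1) * (delta t)%:E
   + alpha Phat rhat F eps delta T t.+1)%E.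
Proof. by move=> tT; rewrite /alpha subSn. Qed.

Lemma alpha_ge0 T t : (forall s, (t <= s <= T)%N -> 0 <= eps s /\ 0 <= delta s) ->
  (0 <= alpha Phat rhat F eps delta T t)%E.
Proof.
move Tt : (T.+1 - t)%N => n; elim: n t Tt => [|n IH] t Tt pos.
  by rewrite /alpha Tt.
have [e0 d0] : 0 <= eps t /\ 0 <= delta t by apply: pos; lia.
rewrite alpha_rec; last by lia.
rewrite !adde_ge0 ?mule_ge0 ?minkowski_functional_ge0 ?lee_fin //.
by apply: IH => [|s s_range]; [lia | apply: pos; lia].
Qed.

End ais_recursions.

Section ais_value_bounds.
Context {R : realType} {A : finType} {T : nat}.
Context {dY : measure_display} {Y : measurableType dY}.
Context {dH : nat -> measure_display} {H : forall t, measurableType (dH t)}.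
Context {ext : forall t, H t -> Y -> A -> H t.+1}.
Context {K : forall t, H t -> A -> probability (Y * R)%type R}.
Context {dZ : nat -> measure_display} {Z : forall t, measurableType (dZ t)}.
Context {sigma : forall t, H t -> Z t}.
Context {Phat : forall t, Z t -> A -> probability (Z t.+1) R}.
Context {rhat : forall t, Z t -> A -> R}.
Context {F : forall t, set (Z t.+1 -> R)} {eps delta : nat -> R}.
Context {pihat : forall t, Z t -> A -> R}.

Local Notation pi := (fun t h a => pihat t (sigma t h) a).
Local Notation Qo := (Qopt ext K T).
Local Notation Vo := (Vopt ext K T).
Local Notation Qp := (Qpol ext K pi T).
Local Notation Vp := (Vpol ext K pi T).
Local Notation Qh := (Qhat Phat rhat T).
Local Notation Vh := (Vhat Phat rhat T).
Local Notation al := (alpha Phat rhat F eps delta T).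

Hypothesis F_measurable : forall t f, F t f -> measurable_fun setT f.
Hypothesis F_bounded : forall t, exists M : R, forall f z, F t f -> `|f z| <= M.
Hypothesis eps_delta_gt0 :
  forall t, (1 <= t <= T)%N -> 0 < eps t /\ 0 < delta t.
Hypothesis sigma_measurable : forall t, measurable_fun setT (sigma t).
Hypothesis ext_measurable :
  forall t (h : H t) (a : A), measurable_fun setT (fun y : Y => ext t h y a).
Hypothesis K_integrable : forall t, (1 <= t <= T)%N -> forall (h : H t) (a : A),
  (K t h a).-integrable setT (fun yr => (yr.2)%:E) /\
  (K t h a).-integrable setT (fun yr => (Vo t.+1 (ext t h yr.1 a))%:E) /\
  (K t h a).-integrable setT (fun yr => (Vp t.+1 (ext t h yr.1 a))%:E).
Hypothesis AP1 : forall t, (1 <= t <= T)%N -> forall (h : H t) (a : A),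
  `| Rintegral (K t h a) setT (fun yr => yr.2) - rhat t (sigma t h) a | <= eps t.
Hypothesis AP2 : forall t, (1 <= t <= T)%N -> forall (h : H t) (a : A),
  (ipm (F t) (pushforward (K t h a) (fun yr => sigma t.+1 (ext t h yr.1 a)))
     (Phat t (sigma t h) a) <= (delta t)%:E)%E.
Hypothesis pihat_greedy : forall t, (1 <= t <= T)%N -> forall z : Z t,
  is_distr (pihat t z) /\
  (forall a, 0 < pihat t z a -> forall b, Qh t z b <= Qh t z a).

Let V_close t := forall h : H t,
  ((`|Vo t h - Vh t (sigma t h)|)%:E <= al t)%E /\
  ((`|Vp t h - Vh t (sigma t h)|)%:E <= al t)%E.

Let Q_close t := forall (h : H t) (a : A),
  ((`|Qo t h a - Qh t (sigma t h) a|)%:E <= al t)%E /\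
  ((`|Qp t h a - Qh t (sigma t h) a|)%:E <= al t)%E.

Let al_ge0 t : (1 <= t)%N -> (0 <= al t)%E.
Proof.
move=> t1; apply: alpha_ge0 => s s_range.
by have [e0 d0] := eps_delta_gt0 s ltac:(lia); rewrite !ltW.
Qed.

Let Q_step t : (1 <= t <= T)%N -> V_close t.+1 -> Q_close t.
Proof.
move=> t_range Vc h a.
have [_ d0] := eps_delta_gt0 t t_range.
have [i_rw [i_Vo i_Vp]] := K_integrable t t_range h a.
have g_measurable : measurable_fun setT
    (fun yr : Y * R => sigma t.+1 (ext t h yr.1 a)).
  exact: measurableT_comp (sigma_measurable _)
    (measurableT_comp (ext_measurable t h a) measurable_fst).
have al0 := al_ge0 t.+1 isT.
rewrite alpha_rec; last by case/andP: t_range.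
have step := bellman_step_dist (F_measurable t) (F_bounded t) g_measurable d0 al0.
split; [rewrite /Qopt /Qhat | rewrite /Qpol /Qhat].
- apply: step => //; [exact: AP1 | by move=> yr; exact: (Vc _).1 | exact: AP2].
- apply: step => //; [exact: AP1 | by move=> yr; exact: (Vc _).2 | exact: AP2].
Qed.

Let V_step t : (1 <= t <= T)%N -> Q_close t -> V_close t.
Proof.
move=> t_range Qc h; have tT : (t <= T)%N by case/andP: t_range.
have [pi_distr pi_argmax] := pihat_greedy t t_range (sigma t h).
move: (Qc h) (al_ge0 t (proj1 (andP t_range))).
case: (al t) => [c | | ] Qch al0 //; last by rewrite !leey.
rewrite !lee_fin Vopt_rec // Vpol_rec // Vhat_rec //; split.
- by apply: ler_dist_fmax => // a; rewrite -lee_fin; exact: (Qch a).1.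
- rewrite (fmax_distr_argmax pi_distr pi_argmax).
  by apply: ler_dist_distr_sum => // a; rewrite -lee_fin; exact: (Qch a).2.
Qed.

Let V_close_from t : (1 <= t)%N -> V_close t.
Proof.
move Tt : (T.+1 - t)%N => n; elim: n t Tt => [|n IH] t Tt t1.
  by move=> h; rewrite /Vopt /Vpol /Vhat /alpha Tt /= subrr normr0.
have t_range : (1 <= t <= T)%N by lia.
by apply/V_step/Q_step/IH => //; lia.
Qed.

Lemma ais_value_bounds t : (1 <= t <= T)%N -> forall (h : H t) (a : A),
  [/\ ((`|Qo t h a - Qh t (sigma t h) a|)%:E <= al t)%E,
      ((`|Qp t h a - Qh t (sigma t h) a|)%:E <= al t)%E,
      ((`|Vo t h - Vh t (sigma t h)|)%:E <= al t)%E &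
      ((`|Vp t h - Vh t (sigma t h)|)%:E <= al t)%E].
Proof.
move=> t_range h a; have t1 : (1 <= t)%N by case/andP: t_range.
have [Qo_h Qp_h] := Q_step t t_range (V_close_from t.+1 isT) h a.
by have [Vo_h Vp_h] := V_close_from t t1 h.
Qed.

End ais_value_bounds.

Theorem mainTheorem2
  (R : realType) (A : finType) (T : nat)
  (* the stochastic input-output system *)
  (dY : measure_display) (Y : measurableType dY)
  (dH : nat -> measure_display) (H : forall t, measurableType (dH t))
  (ext : forall t, H t -> Y -> A -> H t.+1)
  (K : forall t, H t -> A -> probability (Y * R)%type R)
  (* the AIS generator *)
  (dZ : nat -> measure_display) (Z : forall t, measurableType (dZ t))
  (sigma : forall t, H t -> Z t)
  (Phat : forall t, Z t -> A -> probability (Z t.+1) R)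
  (rhat : forall t, Z t -> A -> R)
  (F : forall t, set (Z t.+1 -> R))
  (eps delta : nat -> R)
  (pihat : forall t, Z t -> A -> R) :
  (* F : uniformly bounded measurable functions *)
  (forall t, (forall f, F t f -> measurable_fun setT f) /\
             (exists M : R, forall f z, F t f -> `|f z| <= M)) ->
  (forall t, (1 <= t <= T)%N -> 0 < eps t /\ 0 < delta t) ->
  (* sigma_t(H_t) and H_{t+1} are random variables *)
  (forall t, measurable_fun setT (sigma t)) ->
  (forall t (h : H t) (a : A), measurable_fun setT (fun y : Y => ext t h y a)) ->
  (* expectations appearing in the value functions are well defined *)
  (forall t, (1 <= t <= T)%N -> forall (h : H t) (a : A),
     (K t h a).-integrable setT (fun yr => (yr.2)%:E) /\
     (K t h a).-integrable setT
        (fun yr => (Vopt ext K T t.+1 (ext t h yr.1 a))%:E) /\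
     (K t h a).-integrable setT
        (fun yr => (Vpol ext K (fun t h a => pihat t (sigma t h) a)
                       T t.+1 (ext t h yr.1 a))%:E)) ->
  (forall t, (1 <= t <= T)%N -> forall (z : Z t) (a : A),
     (Phat t z a).-integrable setT (fun z' => (Vhat Phat rhat T t.+1 z')%:E)) ->
  (* (AP1) *)
  (forall t, (1 <= t <= T)%N -> forall (h : H t) (a : A),
     `| Rintegral (K t h a) setT (fun yr => yr.2) - rhat t (sigma t h) a |
       <= eps t) ->
  (* (AP2) *)
  (forall t, (1 <= t <= T)%N -> forall (h : H t) (a : A),
     (ipm (F t)
        (pushforward (K t h a) (fun yr => sigma t.+1 (ext t h yr.1 a)))
        (Phat t (sigma t h) a) <= (delta t)%:E)%E) ->
  (* pihat_t(z) is a distribution supported on argmax_a Qhat_t(z, a) *)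
  (forall t, (1 <= t <= T)%N -> forall z : Z t,
     is_distr (pihat t z) /\
     (forall a, 0 < pihat t z a -> forall b, Qhat Phat rhat T t z b <= Qhat Phat rhat T t z a)) ->
  forall t, (1 <= t <= T)%N -> forall (h : H t) (a : A),
    let pi := fun t h a => pihat t (sigma t h) a in
    let al := alpha Phat rhat F eps delta T t in
    ((`| Qopt ext K T t h a - Qhat Phat rhat T t (sigma t h) a |)%:E <= al)%E /\
    ((`| Vopt ext K T t h - Vhat Phat rhat T t (sigma t h) |)%:E <= al)%E /\
    ((`| Qopt ext K T t h a - Qpol ext K pi T t h a |)%:E <= 2%:E * al)%E /\
    ((`| Vopt ext K T t h - Vpol ext K pi T t h |)%:E <= 2%:E * al)%E.
Proof.
move=> F_regular eps_delta_gt0 sigma_measurable ext_measurable K_integrable _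
  AP1 AP2 pihat_greedy t t_range h a pi al.
have [Qo_h Qp_h Vo_h Vp_h] := ais_value_bounds (fun s => (F_regular s).1)
  (fun s => (F_regular s).2) eps_delta_gt0 sigma_measurable ext_measurable
  K_integrable AP1 AP2 pihat_greedy t t_range h a.
split; first exact: Qo_h.
split; first exact: Vo_h.
split; first exact: lee_dist_via_center Qo_h Qp_h.
exact: lee_dist_via_center Vo_h Vp_h.
Qed.
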